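(* In the setting described in the context, let $i\in V$, $j\in N_C(i)$, $W=W_{ij}$ and $Q=W-H\bar H W$. Then for every $\tilde x\in\mathbb{R}^m$, with $Z=H\bar H\tilde x$, we have $QZ=\mathbf{0}_m$.
   Context: Let $V=\{1,\ldots,N\}$, $N\ge 2$, and let $G_I=(V,E_I)$ be a connected undirected graph which is not complete, with adjacency matrix $A$; let $B=A+I_N$. For $i\in V$ let $N_I(i)$ be the set of neighbors of $i$ in $G_I$, $\tilde N_I(i)=N_I(i)\cup\{i\}$, $m_i=\deg_{G_I}(i)+1$, $m=\sum_{i=1}^N m_i$, $\mathbf m=(m_1,\ldots,m_N)^T$. For $i,j\in V$ set $s_{ij}=\sum_{l=1}^{j}B(i,l)+\sum_{r=1}^{i-1}m_r$ (the last sum is $0$ for $i=1$). Let $e_1,\ldots,e_m$ be the standard basis of $\mathbb{R}^m$ and define $E_j^i=e_{s_{ij}}$ if $j\in\tilde N_I(i)$ and $E_j^i=\mathbf{0}_m$ otherwise. Let $H=\big[\sum_{i=1}^N E_1^i,\ldots,\sum_{i=1}^N E_N^i\big]\in\mathbb{R}^{m\times N}$ and $\bar H=\mathrm{diag}(1/m_1,\ldots,1/m_N)H^T\in\mathbb{R}^{N\times m}$. Let $G_C=(V,E_C)$ be a communication graph with $G_m\subseteq G_C\subseteq G_I$, where $G_m$ is a maximal triangle-free spanning subgraph of $G_I$ (a triangle-free spanning subgraph such that adding any edge of $G_I$ not in it creates a triangle); $N_C(i)$ denotes the neighbors of $i$ in $G_C$. For $i,j\in V$ let $\mathrm{ind}(i,j)=\tilde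 N_I(i)\cap\tilde N_I(j)$ and $W_{ij}=I_m-\tfrac12\sum_{l\in \mathrm{ind}(i,j)}(E_l^{i}-E_l^{j})(E_l^{i}-E_l^{j})^T$. *)

(* Vertices V = {1..N} are modelled as 'I_N (0-based). *)
From HB Require Import structures.
From mathcomp Require Import all_boot all_order all_algebra.
Set Implicit Arguments. Unset Strict Implicit. Unset Printing Implicit Defensive.
Import Order.TTheory GRing.Theory Num.Theory.
Local Open Scope ring_scope.

Section Defs.
Variable N : nat.

Definition simple_graph (e : rel 'I_N) : Prop :=
  (forall x y, e x y = e y x) /\ (forall x, ~~ e x x).

Definition graph_connected (e : rel 'I_N) : Prop := forall x y, connect e x y.

Definition graph_not_complete (e : rel 'I_N) : Prop :=
  exists x y, (x != y) && ~~ e x y.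

Definition subgraph (e1 e2 : rel 'I_N) : Prop := forall x y, e1 x y -> e2 x y.

Definition triangle_free (e : rel 'I_N) : Prop :=
  forall x y z, ~ [&& e x y, e y z & e x z].

Definition add_edge (e : rel 'I_N) (u v : 'I_N) : rel 'I_N :=
  fun x y => [|| e x y, (x == u) && (y == v) | (x == v) && (y == u)].

Definition maximal_triangle_free_subgraph (em eI : rel 'I_N) : Prop :=
  [/\ simple_graph em, subgraph em eI, triangle_free em &
      forall u v, eI u v -> ~~ em u v -> ~ triangle_free (add_edge em u v)].

Variable eI : rel 'I_N.

Definition cnbhd (i : 'I_N) : pred 'I_N := fun j => (j == i) || eI i j.

Definition mdeg (i : 'I_N) : nat := #|[pred j | eI i j]|.+1.

Definition msum : nat := \sum_(i < N) mdeg i.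

Definition Bmx (i l : 'I_N) : nat := cnbhd i l.

(* s_{ij}, 1-based as in the paper *)
Definition spos (i j : 'I_N) : nat :=
  (\sum_(l < N | (l <= j)%N) Bmx i l + \sum_(r < N | (r < i)%N) mdeg r)%N.

Variable R : realFieldType.

(* E_j^i : the standard basis vector e_{s_ij} (0-based index s_ij - 1) or 0 *)
Definition Evec (j i : 'I_N) : 'cV[R]_msum :=
  \col_(k < msum) (if cnbhd i j && (k == (spos i j).-1 :> nat) then 1 else 0).

Definition Hmx : 'M[R]_(msum, N) := \matrix_(k < msum, j < N) (\sum_(i < N) Evec j i) k 0.

Definition Hbar : 'M[R]_(N, msum) :=
  diag_mx (\row_(i < N) ((mdeg i)%:R)^-1) *m Hmx^T.

Definition Wmx (i j : 'I_N) : 'M[R]_msum :=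
  1%:M - 2^-1 *: \sum_(l < N | cnbhd i l && cnbhd j l)
                    ((Evec l i - Evec l j) *m (Evec l i - Evec l j)^T).

End Defs.

From HB Require Import structures.
From mathcomp Require Import all_boot all_order all_algebra.
From mathcomp Require Import zify.
Import Order.TTheory GRing.Theory Num.Theory.

Set Implicit Arguments. Unset Strict Implicit.
Local Open Scope ring_scope.

(* The rows of H are indexed by the pairs (a, l) with l in the closed
   neighbourhood of a: agent a owns the m_a consecutive rows starting at
   [block_offset a], and within that block E_l^a sits at the rank of l in the
   neighbourhood.  Distinct pairs therefore give distinct standard basis
   vectors, whence (E_l^a)^T H = [l in Ñ(a)] e_l^T and H^T H = diag(m_a): the
   matrix Hbar is a left inverse of H.  For l in both closed neighbourhoods of
   i and j, (E_l^i - E_l^j)^T H = 0, so W H = H.  Hence Q H = H - H Hbar H = 0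
   and Q Z = (Q H) (Hbar x) = 0. *)

Lemma leq_sum_subpred_add (I : finType) (P Q : pred I) (F : I -> nat) x :
  subpred P Q -> Q x -> ~~ P x ->
  (\sum_(i | P i) F i + F x <= \sum_(i | Q i) F i)%N.
Proof.
move=> PQ Qx nPx; rewrite [leqRHS](bigID P) /=.
rewrite (eq_bigl P) => [|i]; last by case Pi: (P i); rewrite ?andbT ?andbF ?PQ.
by rewrite leq_add2l (bigD1 x) ?Qx ?nPx //= leq_addr.
Qed.

Section Slots.
Variables (N : nat) (eI : rel 'I_N).

Definition block_offset (a : 'I_N) : nat := \sum_(r < N | (r < a)%N) mdeg eI r.

Lemma sum_Bmx a : (\sum_(l < N) Bmx eI a l)%N = #|cnbhd eI a|.
Proof.
by rewrite -sum1_card [RHS]big_mkcond; apply: eq_bigr => l _; rewrite /Bmx unfold_in.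
Qed.

Lemma card_cnbhd_le a : (#|cnbhd eI a| <= mdeg eI a)%N.
Proof.
rewrite (cardD1 a) [a \in _]unfold_in /cnbhd eqxx /= add1n ltnS.
apply: subset_leq_card; apply/subsetP => l.
by rewrite !inE unfold_in /= => /andP[/negPf-> /=].
Qed.

Lemma card_cnbhd : irreflexive eI -> forall a, #|cnbhd eI a| = mdeg eI a.
Proof.
move=> irr a; rewrite (cardD1 a) [a \in _]unfold_in /cnbhd eqxx /= add1n.
congr _.+1; apply: eq_card => l; rewrite !inE unfold_in /=.
by case: eqP => [->|]; rewrite ?irr.
Qed.

Lemma block_offset_lt_spos a b : cnbhd eI a b -> (block_offset a < spos eI a b)%N.
Proof.
move=> h; rewrite /spos addnC -[X in (X < _)%N]addn0 ltn_add2l.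
by rewrite (bigD1 b) //= /Bmx h.
Qed.

Lemma spos_le_block_end a b : (spos eI a b <= block_offset a + mdeg eI a)%N.
Proof.
rewrite /spos addnC leq_add2l; apply: leq_trans (card_cnbhd_le a).
rewrite -sum_Bmx [leqRHS](bigID (fun l : 'I_N => (l <= b)%N)) /=; exact: leq_addr.
Qed.

Lemma block_end_le_offset (a c : 'I_N) :
  (a < c)%N -> (block_offset a + mdeg eI a <= block_offset c)%N.
Proof.
move=> ac; apply: leq_sum_subpred_add => [r /= ra||]; rewrite /= ?ltnn //.
exact: ltn_trans ra ac.
Qed.

Lemma block_end_le_msum a : (block_offset a + mdeg eI a <= msum eI)%N.
Proof. by apply: (@leq_sum_subpred_add _ _ predT) => //=; rewrite ltnn. Qed.

Lemma spos_lt_nbhd a (b b' : 'I_N) :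
  (b < b')%N -> cnbhd eI a b' -> (spos eI a b < spos eI a b')%N.
Proof.
move=> bb' h; rewrite /spos ltn_add2r.
have := @leq_sum_subpred_add _ (fun l : 'I_N => (l <= b)%N)
  (fun l : 'I_N => (l <= b')%N) (Bmx eI a) b'.
rewrite /Bmx h addn1; apply=> //= [l lb|]; last by rewrite -ltnNge.
exact: leq_trans lb (ltnW bb').
Qed.

Lemma spos_lt_msum a b : cnbhd eI a b -> ((spos eI a b).-1 < msum eI)%N.
Proof.
move=> h; have := block_offset_lt_spos h; have := spos_le_block_end a b.
have := block_end_le_msum a; lia.
Qed.

Lemma spos_inj a b c d : cnbhd eI a b -> cnbhd eI c d ->
  (spos eI a b).-1 = (spos eI c d).-1 -> a = c /\ b = d.
Proof.
move=> hab hcd; have := block_offset_lt_spos hab; have := block_offset_lt_spos hcd.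
move=> lt_cd lt_ab e; have {}e : spos eI a b = spos eI c d by lia.
have [ac|ca|/val_inj ac] := ltngtP a c.
- have := block_end_le_offset ac; have := spos_le_block_end a b; lia.
- have := block_end_le_offset ca; have := spos_le_block_end c d; lia.
subst c; split=> //; have [bd|db|/val_inj //] := ltngtP b d.
- by have := spos_lt_nbhd bd hcd; rewrite e ltnn.
- by have := spos_lt_nbhd db hab; rewrite e ltnn.
Qed.
End Slots.

Section Incidence.
Variables (N : nat) (eI : rel 'I_N) (R : realFieldType).

Local Notation E := (Evec eI R).
Local Notation H := (Hmx eI R).

Lemma Evec_delta a l (h : cnbhd eI a l) :
  E l a = delta_mx (Ordinal (spos_lt_msum h)) 0.
Proof.
by apply/matrixP => k z; rewrite ord1 !mxE h eqxx andbT -val_eqE; case: eqP.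
Qed.

Lemma Evec_eq0 a l : ~~ cnbhd eI a l -> E l a = 0.
Proof. by move=> /negPf h; apply/matrixP => k z; rewrite !mxE h. Qed.

Lemma trEvec_mulEvec l a b c :
  ((E l a)^T *m E b c) 0 0 = ((a == c) && (l == b) && cnbhd eI a l)%:R.
Proof.
have [hab|/Evec_eq0->] := boolP (cnbhd eI a l); last first.
  by rewrite trmx0 mul0mx mxE andbF.
have [hcd|ncd] := boolP (cnbhd eI c b); last first.
  rewrite (Evec_eq0 ncd) mulmx0 mxE; case: eqP => [ac|]; case: eqP => [lb|] //=.
  by subst; rewrite hab in ncd.
rewrite (Evec_delta hab) (Evec_delta hcd) trmx_delta mul_delta_mx_cond.
rewrite mulmxnE mxE !eqxx /=.
rewrite andbT -val_eqE /=; case: eqP => [/(spos_inj hab hcd) [-> ->]|ne].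
  by rewrite !eqxx.
by case: eqP => [ac|]; case: eqP => [lb|] //; subst.
Qed.

Lemma col_Hmx b : col b H = \sum_c E b c.
Proof. by apply/matrixP => k z; rewrite ord1 !mxE summxE. Qed.

Lemma trEvec_mulH l a : (E l a)^T *m H = (cnbhd eI a l)%:R *: delta_mx 0 l.
Proof.
apply/rowP => b.
have -> : ((E l a)^T *m H) 0 b = (col b ((E l a)^T *m H)) 0 0.
  by rewrite [RHS]mxE.
rewrite colE -mulmxA -colE col_Hmx mulmx_sumr summxE.
under eq_bigr do rewrite trEvec_mulEvec.
rewrite (bigD1 a) //= eqxx big1 => [|c /negPf ac]; last by rewrite eq_sym ac.
by rewrite addr0 !mxE eqxx /= -natrM mulnb andbC eq_sym.
Qed.

Lemma Wmx_mulH i j : Wmx eI R i j *m H = H.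
Proof.
rewrite mulmxBl mul1mx -scalemxAl mulmx_suml big1 ?scaler0 ?subr0 //.
move=> l /andP[hi hj]; rewrite -mulmxA.
have -> : (E l i - E l j)^T *m H = 0.
  by rewrite linearB mulmxBl /= !trEvec_mulH hi hj subrr.
by rewrite mulmx0.
Qed.

Hypotheses (eI_sym : symmetric eI) (eI_irr : irreflexive eI).

Lemma trH_mulH : H^T *m H = diag_mx (\row_a (mdeg eI a)%:R).
Proof.
apply/matrixP => a b.
have -> : (H^T *m H) a b = ((col a H)^T *m H) 0 b.
  by rewrite tr_col -row_mul [RHS]mxE.
rewrite col_Hmx linear_sum mulmx_suml summxE.
under eq_bigr do rewrite trEvec_mulH !mxE eqxx /= -natrM.
rewrite -natr_sum !mxE; have [<-|ne] := eqVneq b a; last first.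
  by rewrite big1 // => c _; rewrite muln0.
rewrite mulr1n -(card_cnbhd eI_irr) -sum_Bmx; congr _%:R; apply: eq_bigr => c _.
by rewrite muln1 /Bmx /cnbhd eq_sym eI_sym.
Qed.

Lemma Hbar_mulH : Hbar eI R *m H = 1%:M.
Proof.
rewrite /Hbar -mulmxA trH_mulH mulmx_diag -diag_const_mx; congr diag_mx.
by apply/rowP => a; rewrite !mxE mulVf // pnatr_eq0.
Qed.
End Incidence.

Lemma complement_proj_mul_eq0 (R : pzRingType) (m n : nat)
    (W : 'M[R]_m) (H : 'M[R]_(m, n)) (Hb : 'M[R]_(n, m)) :
  W *m H = H -> Hb *m H = 1%:M -> (W - H *m Hb *m W) *m H = 0.
Proof. by move=> WH HbH; rewrite mulmxBl -!mulmxA WH HbH mulmx1 subrr. Qed.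

Theorem lemma4 (R : realFieldType) (N : nat) (eI em eC : rel 'I_N)
  (hN : (2 <= N)%N)
  (hI : simple_graph eI) (hconn : graph_connected eI)
  (hnc : graph_not_complete eI)
  (hm : maximal_triangle_free_subgraph em eI)
  (hC : simple_graph eC) (hmC : subgraph em eC) (hCI : subgraph eC eI)
  (i j : 'I_N) (hij : eC i j) :
  let W := Wmx eI R i j in
  let Q := W - Hmx eI R *m Hbar eI R *m W in
  forall x : 'cV[R]_(msum eI),
    Q *m (Hmx eI R *m Hbar eI R *m x) = 0.
Proof.
move=> W Q x; have [eI_sym eI_nloop] := hI.
have eI_irr : irreflexive eI := fun v => negbTE (eI_nloop v).
rewrite -!mulmxA mulmxA complement_proj_mul_eq0 ?mul0mx //.
- exact: Wmx_mulH.
- exact: Hbar_mulH.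
Qed.
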